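(* Let $f$ be a homeomorphism of a compact metric space $X$ and suppose $f|_{\Omega(f)}$ is expansive with expansivity constant $c>0$. Then $W^s_c(x)\subset W^s(x)$ and $W^u_c(x)\subset W^u(x)$ for every $x\in X$.
   Context: $\Omega(f)$ is the non-wandering set. $c>0$ is an expansivity constant of $f|_{\Omega(f)}$ if for all distinct $x,y\in\Omega(f)$ there is $n\in\mathbb{Z}$ with $d(f^n(x),f^n(y))>c$. $W^s_c(x)=\{y: d(f^n(x),f^n(y))\le c\ \forall n\ge0\}$, $W^u_c(x)=\{y: d(f^{-n}(x),f^{-n}(y))\le c\ \forall n\ge0\}$, $W^s(x)=\{y: d(f^n(x),f^n(y))\to0\ (n\to+\infty)\}$, $W^u(x)=\{y: d(f^{-n}(x),f^{-n}(y))\to0\ (n\to+\infty)\}$. *)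

From Stdlib Require Import Reals List ZArith.
Open Scope R_scope.

Section MetricDefs.
Context {X : Type} (d : X -> X -> R).

Definition is_metric : Prop :=
  (forall x y, 0 <= d x y) /\
  (forall x y, d x y = 0 <-> x = y) /\
  (forall x y, d x y = d y x) /\
  (forall x y z, d x z <= d x y + d y z).

Definition is_open (U : X -> Prop) : Prop :=
  forall x, U x -> exists eps, eps > 0 /\ forall y, d x y < eps -> U y.

Definition compact_space : Prop :=
  forall (I : Type) (U : I -> X -> Prop),
    (forall i, is_open (U i)) -> (forall x, exists i, U i x) ->
    exists l : list I, forall x, exists i, In i l /\ U i x.

Definition continuous_map (f : X -> X) : Prop :=
  forall x eps, eps > 0 -> exists delta, delta > 0 /\
    forall y, d x y < delta -> d (f x) (f y) < eps.

Definition homeomorphism (f g : X -> X) : Prop :=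
  continuous_map f /\ continuous_map g /\
  (forall x, g (f x) = x) /\ (forall x, f (g x) = x).

(* forward and integer iterates; g plays the role of f^{-1} *)
Definition iter_n (f : X -> X) (n : nat) : X -> X := Nat.iter n f.

Definition iter_z (f g : X -> X) (z : Z) : X -> X :=
  match z with
  | Z0 => fun x => x
  | Zpos p => iter_n f (Pos.to_nat p)
  | Zneg p => iter_n g (Pos.to_nat p)
  end.

(* non-wandering points: every neighbourhood U of x meets f^n(U), some n >= 1 *)
Definition nonwandering (f : X -> X) (x : X) : Prop :=
  forall eps, eps > 0 -> exists (n : nat) (y : X),
    (n >= 1)%nat /\ d x y < eps /\ d x (iter_n f n y) < eps.

Definition expansive_on_nonwandering (f g : X -> X) (c : R) : Prop :=
  c > 0 /\
  forall x y, nonwandering f x -> nonwandering f y -> x <> y ->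
    exists n : Z, d (iter_z f g n x) (iter_z f g n y) > c.

Definition local_stable (f : X -> X) (c : R) (x y : X) : Prop :=
  forall n : nat, d (iter_n f n x) (iter_n f n y) <= c.

Definition local_unstable (g : X -> X) (c : R) (x y : X) : Prop :=
  forall n : nat, d (iter_n g n x) (iter_n g n y) <= c.

Definition stable_set (f : X -> X) (x y : X) : Prop :=
  Un_cv (fun n => d (iter_n f n x) (iter_n f n y)) 0.

Definition unstable_set (g : X -> X) (x y : X) : Prop :=
  Un_cv (fun n => d (iter_n g n x) (iter_n g n y)) 0.

End MetricDefs.

(* If y stays c-close to x along the forward orbit but d(f^n x, f^n y) does not
   tend to 0, compactness yields a subsequence along which (f^n x, f^n y)
   converges to a pair (p, q) with p <> q.  Both are limits of orbit points, hence
   nonwandering, so expansivity separates some iterates f^m p, f^m q by more than c;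
   but by continuity d(f^m p, f^m q) is a limit of distances d(f^(m+n) x, f^(m+n) y)
   that are at most c.  The unstable case is the stable case for f^-1. *)

From Stdlib Require Import Reals List ZArith Lra Lia Classical.
Open Scope R_scope.

Definition frequently (P : nat -> Prop) : Prop :=
  forall N, exists n, (N <= n)%nat /\ P n.

Definition eventually (P : nat -> Prop) : Prop :=
  exists N, forall n, (N <= n)%nat -> P n.

Lemma not_Un_cv_0_frequently (u : nat -> R) :
  (forall n, 0 <= u n) -> ~ Un_cv u 0 ->
  exists eps, 0 < eps /\ frequently (fun n => eps <= u n).
Proof.
  intros Hu Hcv. apply NNPP; intro Hfreq. apply Hcv; intros eps Heps.
  apply NNPP; intro HN. apply Hfreq. exists eps; split; [exact Heps|]. intro N.
  apply NNPP; intro Hn. apply HN. exists N. intros n Hle.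
  unfold R_dist. rewrite Rminus_0_r, Rabs_pos_eq by apply Hu.
  apply Rnot_le_lt. intro Hle'. apply Hn. eauto.
Qed.

Lemma list_uniform_bounds {I : Type} (E : I -> R) (M : I -> nat) (l : list I) :
  (forall i, 0 < E i) ->
  exists e N, 0 < e /\ forall i, In i l -> e <= E i /\ (M i <= N)%nat.
Proof.
  intros HE. induction l as [|a l IH].
  - exists 1, 0%nat. split; [lra | intros i []].
  - destruct IH as [e [N [He H]]]. exists (Rmin e (E a)), (Nat.max N (M a)).
    split; [apply Rmin_pos; auto|].
    intros i [<-|Hi].
    + split; [apply Rmin_r | lia].
    + destruct (H i Hi). split; [pose proof (Rmin_l e (E a)); lra | lia].
Qed.

Section CompactMetric.

Context {X : Type} (d : X -> X -> R).
Hypothesis d_metric : is_metric d.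

Let d_refl x : d x x = 0.
Proof. apply (proj1 (proj2 d_metric)); reflexivity. Qed.
Let d_sym x y : d x y = d y x.
Proof. apply d_metric. Qed.
Let d_triangle x y z : d x z <= d x y + d y z.
Proof. apply d_metric. Qed.

Lemma ball_is_open p e : is_open d (fun y => d p y < e).
Proof.
  intros y Hy. exists (e - d p y). split; [lra|].
  intros z Hz. pose proof (d_triangle p y z). lra.
Qed.

Definition cluster_point (a : nat -> X) (p : X) : Prop :=
  forall e, 0 < e -> frequently (fun n => d p (a n) < e).

Hypothesis d_compact : compact_space d.

Lemma compact_cluster_along (a : nat -> X) (T : R -> nat -> Prop) :
  (forall e e' n, 0 < e -> e <= e' -> T e n -> T e' n) ->
  (forall e, 0 < e -> frequently (T e)) ->
  exists p, forall e, 0 < e -> frequently (fun n => T e n /\ d p (a n) < e).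
Proof.
  intros Tmono Tfreq. apply NNPP; intro Hnone.
  set (far x e N := 0 < e /\ forall n, (N <= n)%nat -> T e n -> e <= d x (a n)).
  set (I := {x : X & {e : R & {N : nat | far x e N}}}).
  set (U (i : I) y := d (projT1 i) y < projT1 (projT2 i)).
  destruct (d_compact I U) as [l Hl].
  - intro i. apply ball_is_open.
  - intro x. destruct (not_all_ex_not _ _ (not_ex_all_not _ _ Hnone x)) as [e He].
    apply imply_to_and in He as [He Hfreq].
    destruct (not_all_ex_not _ _ Hfreq) as [N HN].
    assert (Hfar : far x e N).
    { split; [exact He|]. intros n Hn HT. apply Rnot_lt_le. intro Hlt. eauto. }
    exists (existT _ x (existT _ e (exist _ N Hfar))).
    unfold U; simpl. rewrite d_refl. lra.
  - destruct (list_uniform_bounds (fun i : I => projT1 (projT2 i))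
                (fun i : I => proj1_sig (projT2 (projT2 i))) l) as [e [N [He Hb]]].
    { intro i. exact (proj1 (proj2_sig (projT2 (projT2 i)))). }
    destruct (Tfreq e He N) as [n [Hn HT]].
    destruct (Hl (a n)) as [i [Hi Hin]].
    destruct (Hb i Hi) as [He_le HN_le].
    clear Hi; destruct i as [x [e' [N' [He' Hfar]]]]; unfold U in Hin; simpl in *.
    specialize (Hfar n ltac:(lia) (Tmono e e' n He He_le HT)). lra.
Qed.

Lemma compact_joint_cluster (a b : nat -> X) (P : nat -> Prop) :
  frequently P ->
  exists p q, forall e, 0 < e ->
    frequently (fun n => P n /\ d p (a n) < e /\ d q (b n) < e).
Proof.
  intro HP.
  destruct (compact_cluster_along a (fun _ n => P n)) as [p Hp]; auto.
  destruct (compact_cluster_along b (fun e n => P n /\ d p (a n) < e)) as [q Hq].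
  - intros e e' n _ Hle [HPn Hpa]. split; [exact HPn | lra].
  - exact Hp.
  - exists p, q. intros e He N.
    destruct (Hq e He N) as [n [Hn [[HPn Hpa] Hqb]]]. eauto.
Qed.

Lemma joint_cluster_dist_le (h : X -> X) (a b : nat -> X) (p q : X) (c : R) :
  continuous_map d h ->
  (forall e, 0 < e -> frequently (fun n => d p (a n) < e /\ d q (b n) < e)) ->
  eventually (fun n => d (h (a n)) (h (b n)) <= c) ->
  d (h p) (h q) <= c.
Proof.
  intros Hh Hpq [N HN]. apply Rnot_lt_le; intro Hgt.
  set (gap := d (h p) (h q) - c).
  destruct (Hh p (gap / 2) ltac:(unfold gap; lra)) as [r1 [Hr1 Hcp]].
  destruct (Hh q (gap / 2) ltac:(unfold gap; lra)) as [r2 [Hr2 Hcq]].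
  destruct (Hpq (Rmin r1 r2) (Rmin_pos _ _ Hr1 Hr2) N) as [n [Hn [Hpa Hqb]]].
  pose proof (Rmin_l r1 r2). pose proof (Rmin_r r1 r2).
  specialize (Hcp (a n) ltac:(lra)). specialize (Hcq (b n) ltac:(lra)).
  specialize (HN n Hn).
  pose proof (d_triangle (h p) (h (a n)) (h q)).
  pose proof (d_triangle (h (a n)) (h (b n)) (h q)).
  rewrite (d_sym (h (b n)) (h q)) in *. unfold gap in *. lra.
Qed.

(* Abstract form of the argument: [NW] plays the nonwandering set and the maps
   [h i] the iterates of the homeomorphism. *)
Lemma dist_cv_0_of_expansive {I : Type} (h : I -> X -> X) (NW : X -> Prop)
    (a b : nat -> X) (c : R) :
  (forall i, continuous_map d (h i)) ->
  (forall i, eventually (fun n => d (h i (a n)) (h i (b n)) <= c)) ->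
  (forall p, cluster_point a p -> NW p) ->
  (forall p, cluster_point b p -> NW p) ->
  (forall p q, NW p -> NW q -> p <> q -> exists i, c < d (h i p) (h i q)) ->
  Un_cv (fun n => d (a n) (b n)) 0.
Proof.
  intros Hcont Hclose HNWa HNWb Hexp. apply NNPP; intro Hcv.
  destruct (not_Un_cv_0_frequently _ (fun n => proj1 d_metric _ _) Hcv)
    as [eps [Heps Hfar]].
  destruct (compact_joint_cluster a b _ Hfar) as [p [q Hpq]].
  assert (Hp : cluster_point a p).
  { intros e He N. destruct (Hpq e He N) as [n [Hn [_ [Hpa _]]]]. eauto. }
  assert (Hq : cluster_point b q).
  { intros e He N. destruct (Hpq e He N) as [n [Hn [_ [_ Hqb]]]]. eauto. }
  assert (Hneq : p <> q).
  { intros <-. destruct (Hpq (eps / 2) ltac:(lra) 0%nat) as [n [_ [Hab [Hpa Hpb]]]].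
    pose proof (d_triangle (a n) p (b n)). rewrite (d_sym (a n) p) in *. lra. }
  destruct (Hexp p q (HNWa p Hp) (HNWb q Hq) Hneq) as [i Hi].
  assert (Hle : d (h i p) (h i q) <= c).
  { apply (joint_cluster_dist_le (h i) a b); auto.
    intros e He N. destruct (Hpq e He N) as [n [Hn [_ Hn']]]. eauto. }
  lra.
Qed.

End CompactMetric.

Section Iterates.

Context {X : Type}.

Lemma iter_n_add (f : X -> X) n m x : iter_n f (n + m) x = iter_n f n (iter_n f m x).
Proof. unfold iter_n. induction n; simpl; congruence. Qed.

Lemma iter_n_succ_r (f : X -> X) n x : iter_n f (S n) x = iter_n f n (f x).
Proof. rewrite <- Nat.add_1_r, iter_n_add. reflexivity. Qed.

Lemma iter_n_cancel (f g : X -> X) k x :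
  (forall y, g (f y) = y) -> iter_n g k (iter_n f k x) = x.
Proof.
  intro Hgf. induction k as [|k IH]; [reflexivity|].
  rewrite iter_n_succ_r. change (iter_n f (S k) x) with (f (iter_n f k x)).
  rewrite Hgf. exact IH.
Qed.

Lemma iter_z_opp (f g : X -> X) z x : iter_z g f z x = iter_z f g (- z) x.
Proof. destruct z; reflexivity. Qed.

Lemma iter_z_iter_n_eventually (f g : X -> X) (m : Z) :
  (forall y, g (f y) = y) ->
  eventually (fun n => exists j, forall z, iter_z f g m (iter_n f n z) = iter_n f j z).
Proof.
  intro Hgf. destruct m as [|p|p]; simpl.
  - exists 0%nat. intros n _. exists n. reflexivity.
  - exists 0%nat. intros n _. exists (Pos.to_nat p + n)%nat. intro z.
    symmetry; apply iter_n_add.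
  - exists (Pos.to_nat p). intros n Hn. exists (n - Pos.to_nat p)%nat. intro z.
    replace n with (Pos.to_nat p + (n - Pos.to_nat p))%nat at 1 by lia.
    rewrite iter_n_add. apply iter_n_cancel, Hgf.
Qed.

Variable d : X -> X -> R.

Lemma continuous_map_comp (f g : X -> X) :
  continuous_map d f -> continuous_map d g -> continuous_map d (fun x => f (g x)).
Proof.
  intros Hf Hg x eps He. destruct (Hf (g x) eps He) as [d1 [Hd1 H1]].
  destruct (Hg x d1 Hd1) as [d2 [Hd2 H2]]. exists d2. split; auto.
Qed.

Lemma continuous_map_id : continuous_map d (fun x => x).
Proof. intros x e He. exists e. split; auto. Qed.

Lemma continuous_map_iter_n (f : X -> X) n :
  continuous_map d f -> continuous_map d (iter_n f n).
Proof.
  intro Hf. induction n as [|n IH]; [apply continuous_map_id|].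
  apply (continuous_map_comp f (iter_n f n)); auto.
Qed.

Lemma continuous_map_iter_z (f g : X -> X) m :
  continuous_map d f -> continuous_map d g -> continuous_map d (iter_z f g m).
Proof.
  intros Hf Hg. destruct m; simpl;
    [apply continuous_map_id | apply continuous_map_iter_n; auto ..].
Qed.

Lemma orbit_cluster_point_nonwandering (f : X -> X) x p :
  cluster_point d (fun n => iter_n f n x) p -> nonwandering d f p.
Proof.
  intros Hp eps He. destruct (Hp eps He 0%nat) as [n1 [_ H1]].
  destruct (Hp eps He (S n1)) as [n2 [Hn2 H2]].
  exists (n2 - n1)%nat, (iter_n f n1 x). split; [lia|]. split; [exact H1|].
  rewrite <- iter_n_add. replace (n2 - n1 + n1)%nat with n2 by lia. exact H2.
Qed.

Lemma nonwandering_inverse (f g : X -> X) p :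
  (forall y, g (f y) = y) -> nonwandering d f p -> nonwandering d g p.
Proof.
  intros Hgf Hp eps He. destruct (Hp eps He) as [n [y [Hn [Hy Hfy]]]].
  exists n, (iter_n f n y). rewrite iter_n_cancel by exact Hgf. auto.
Qed.

Lemma expansive_on_nonwandering_inverse (f g : X -> X) c :
  (forall y, g (f y) = y) -> (forall y, f (g y) = y) ->
  expansive_on_nonwandering d f g c -> expansive_on_nonwandering d g f c.
Proof.
  intros Hgf Hfg [Hc Hexp]. split; [exact Hc|]. intros x y Hx Hy Hxy.
  destruct (Hexp x y) as [m Hm];
    [apply (nonwandering_inverse g f); assumption .. | assumption |].
  exists (- m)%Z.
  rewrite (iter_z_opp f g _ x), (iter_z_opp f g _ y), Z.opp_involutive. exact Hm.
Qed.

End Iterates.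

Theorem local_stable_stable_set (X : Type) (d : X -> X -> R) (f g : X -> X) (c : R) x y :
  is_metric d -> compact_space d -> homeomorphism d f g ->
  expansive_on_nonwandering d f g c ->
  local_stable d f c x y -> stable_set d f x y.
Proof.
  intros Hm Hc [Hf [Hg [Hgf _]]] [_ Hexp] Hxy.
  apply (dist_cv_0_of_expansive d Hm Hc (iter_z f g) (nonwandering d f)
           (fun n => iter_n f n x) (fun n => iter_n f n y) c).
  - intro m. apply continuous_map_iter_z; assumption.
  - intro m. destruct (iter_z_iter_n_eventually f g m Hgf) as [N HN].
    exists N. intros n Hn. destruct (HN n Hn) as [j Hj]. rewrite !Hj. apply Hxy.
  - apply orbit_cluster_point_nonwandering.
  - apply orbit_cluster_point_nonwandering.
  - exact Hexp.
Qed.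

Theorem mainTheorem14 (X : Type) (d : X -> X -> R) (f g : X -> X) (c : R) :
  is_metric d -> compact_space d -> homeomorphism d f g ->
  expansive_on_nonwandering d f g c ->
  forall x : X,
    (forall y, local_stable d f c x y -> stable_set d f x y) /\
    (forall y, local_unstable d g c x y -> unstable_set d g x y).
Proof.
  intros Hm Hc Hhomeo Hexp x.
  pose proof Hhomeo as [Hf [Hg [Hgf Hfg]]].
  split; intro y.
  - exact (local_stable_stable_set X d f g c x y Hm Hc Hhomeo Hexp).
  - apply (local_stable_stable_set X d g f c x y Hm Hc).
    + exact (conj Hg (conj Hf (conj Hfg Hgf))).
    + exact (expansive_on_nonwandering_inverse d f g c Hgf Hfg Hexp).
Qed.
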